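(* Let $T>0$, $0<\eta<T$ and $\alpha>\frac{1}{\eta}$. If $y\in C([0,T],[0,\infty))$, then the problem \[ u''(t)+y(t)=0,\quad t\in(0,T),\qquad u'(0)=0,\quad u(T)=\alpha\int_0^{\eta}u(s)\,ds \] has no positive solution.
   Context: A positive solution means a solution $u$ of the problem with $u(t)\ge 0$ for all $t\in[0,T]$ and $u$ not identically zero. *)

From Stdlib Require Import Reals.
From Coquelicot Require Import Coquelicot.
Open Scope R_scope.

Definition cont_on_0T (T : R) (f : R -> R) : Prop :=
  forall t, 0 <= t <= T ->
    filterlim f (within (fun x => 0 <= x <= T) (locally t)) (locally (f t)).

(* u is a solution of  u'' + y = 0 on (0,T),  u'(0) = 0,
   u(T) = alpha * \int_0^eta u(s) ds,
   in the class C[0,T] /\ C^2(0,T) with (right) derivative at 0 equal to 0. *)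
Definition is_solution (T eta alpha : R) (y u : R -> R) : Prop :=
  cont_on_0T T u /\
  (exists du : R -> R,
      (forall t, 0 < t < T -> is_derive u t (du t)) /\
      (forall t, 0 < t < T -> is_derive du t (- y t))) /\
  filterlim (fun h => (u h - u 0) / h) (at_right 0) (locally 0) /\
  u T = alpha * RInt u 0 eta.

Definition is_positive_solution (T eta alpha : R) (y u : R -> R) : Prop :=
  is_solution T eta alpha y u /\
  (forall t, 0 <= t <= T -> 0 <= u t) /\
  (exists t, 0 <= t <= T /\ u t <> 0).

(* Since u'' = -y <= 0, u' is nonincreasing on (0,T), and u'(0) = 0 then forces u' <= 0:
   u is nonincreasing on [0,T].  Hence eta u(T) <= eta u(eta) <= \int_0^eta u, and the
   boundary condition gives u(T) >= alpha eta u(T) with alpha eta > 1, so u(T) = 0.  Then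
   \int_0^eta u = 0, which makes u vanish on (0,eta], hence on (0,T] by monotonicity, and
   at 0 by continuity. *)

From Stdlib Require Import Reals Lra.
From Coquelicot Require Import Coquelicot.
Open Scope R_scope.

Lemma MVT_le (f df : R -> R) (a b m : R) : a <= b ->
  (forall x, a < x < b -> is_derive f x (df x)) ->
  (forall x, a <= x <= b -> continuous f x) ->
  (forall x, a < x < b -> df x <= m) ->
  f b - f a <= m * (b - a).
Proof.
  intros Hab Hd Hc Hm.
  (* [Rmin (df x) m] agrees with [df] inside and is [<= m] at the endpoints too. *)
  destruct (MVT_gen f a b (fun x => Rmin (df x) m)) as [c [_ ->]];
    rewrite ?Rmin_left, ?Rmax_right by lra.
  - intros x Hx. rewrite Rmin_left by (apply Hm, Hx). apply Hd, Hx.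
  - intros x Hx. apply continuity_pt_filterlim, Hc, Hx.
  - apply Rmult_le_compat_r; [lra | apply Rmin_r].
Qed.

(* [f \o clamp T] extends [f] from [0,T] to a function continuous everywhere, as required
   by Coquelicot's mean value theorem and integrability lemmas. *)
Definition clamp (T x : R) : R := Rmax 0 (Rmin T x).

Lemma clamp_in (T x : R) : 0 <= T -> 0 <= clamp T x <= T.
Proof. intros hT. unfold clamp, Rmax, Rmin. repeat destruct Rle_dec; lra. Qed.

Lemma clamp_id (T x : R) : 0 <= x <= T -> clamp T x = x.
Proof. intros Hx. unfold clamp, Rmax, Rmin. repeat destruct Rle_dec; lra. Qed.

Lemma clamp_lipschitz (T x z : R) : Rabs (clamp T z - clamp T x) <= Rabs (z - x).
Proof. unfold clamp, Rmax, Rmin. repeat destruct Rle_dec; split_Rabs; lra. Qed.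

Section Clamped_extension.

Variables (T : R) (f : R -> R).
Hypothesis hT : 0 <= T.

Lemma continuous_clamp_comp : cont_on_0T T f ->
  forall x, continuous (fun x => f (clamp T x)) x.
Proof.
  intros Hc x P [eps HP].
  destruct (Hc (clamp T x) (clamp_in T x hT) _ (locally_ball (f (clamp T x)) eps))
    as [d Hd].
  exists d. intros z Hz. apply HP, Hd.
  - apply (Rle_lt_trans _ _ _ (clamp_lipschitz T x z)), Hz.
  - apply clamp_in, hT.
Qed.

Lemma is_derive_clamp_comp (x l : R) : 0 < x < T ->
  is_derive f x l -> is_derive (fun x => f (clamp T x)) x l.
Proof.
  intros Hx. apply is_derive_ext_loc.
  assert (Hr : 0 < Rmin x (T - x)) by (apply Rmin_pos; lra).
  exists (mkposreal _ Hr). intros z Hz. change (Rabs (z - x) < Rmin x (T - x)) in Hz.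
  pose proof (Rmin_l x (T - x)). pose proof (Rmin_r x (T - x)).
  apply Rabs_def2 in Hz. rewrite clamp_id by lra. reflexivity.
Qed.

Lemma ex_RInt_cont_on_0T (a b : R) : cont_on_0T T f -> 0 <= a <= b -> b <= T ->
  ex_RInt f a b.
Proof.
  intros Hc Hab HbT.
  apply (ex_RInt_ext (fun x => f (clamp T x))).
  - rewrite Rmin_left, Rmax_right by lra. intros x Hx. rewrite clamp_id by lra. reflexivity.
  - apply (ex_RInt_continuous (V := R_CompleteNormedModule)).
    intros z _. apply continuous_clamp_comp, Hc.
Qed.

End Clamped_extension.

Section Concave_solution.

Variables (T : R) (y u du : R -> R).
Hypotheses (hT : 0 < T)
  (hy0 : forall t, 0 <= t <= T -> 0 <= y t)
  (hu : cont_on_0T T u)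
  (hdu : forall t, 0 < t < T -> is_derive u t (du t))
  (hddu : forall t, 0 < t < T -> is_derive du t (- y t))
  (hdu0 : filterlim (fun h => (u h - u 0) / h) (at_right 0) (locally 0)).

Let v (x : R) : R := u (clamp T x).

Let continuous_v (x : R) : continuous v x.
Proof. apply continuous_clamp_comp; [lra | exact hu]. Qed.

Let is_derive_v (x : R) : 0 < x < T -> is_derive v x (du x).
Proof. intros Hx. apply is_derive_clamp_comp, hdu; trivial; lra. Qed.

Lemma solution_derive_nonincreasing (a b : R) : 0 < a <= b -> b < T -> du b <= du a.
Proof.
  intros Hab HbT.
  enough (du b - du a <= 0 * (b - a)) by lra.
  apply (MVT_le du (fun t => - y t)); [lra | | | ].
  - intros x Hx. apply hddu. lra.
  - intros x Hx. apply (ex_derive_continuous (V := R_NormedModule)).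
    exists (- y x). apply hddu. lra.
  - intros x Hx. assert (0 <= y x) by (apply hy0; lra). lra.
Qed.

Lemma solution_derive_nonpos (t : R) : 0 < t < T -> du t <= 0.
Proof.
  intros Ht. apply Rnot_lt_le. intros Hpos.
  destruct (hdu0 _ (locally_ball 0 (mkposreal _ Hpos))) as [d Hd].
  pose proof (cond_pos d).
  pose proof (Rmin_l (d / 2) t). pose proof (Rmin_r (d / 2) t).
  set (h := Rmin (d / 2) t) in *.
  assert (Hh : 0 < h) by (apply Rmin_pos; lra).
  assert (Hslope : Rabs ((u h - u 0) / h - 0) < du t).
  { apply Hd; [| exact Hh]. change (Rabs (h - 0) < d).
    rewrite Rminus_0_r, Rabs_pos_eq; lra. }
  (* On (0,h) the slope of u is at least du t, so the difference quotient is too. *)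
  assert (Hgrow : - v h - - v 0 <= - du t * (h - 0)).
  { apply (MVT_le (fun x => - v x) (fun x => - du x)); [lra | | | ].
    - intros x Hx. apply (is_derive_opp v), is_derive_v. lra.
    - intros x _. apply (continuous_opp v), continuous_v.
    - intros x Hx. enough (du t <= du x) by lra. apply solution_derive_nonincreasing; lra. }
  unfold v in Hgrow. rewrite !clamp_id in Hgrow by lra.
  assert (du t <= (u h - u 0) / h) by (apply Rmult_le_reg_r with h; [lra | field_simplify; lra]).
  split_Rabs; lra.
Qed.

Lemma solution_nonincreasing (a b : R) : 0 <= a <= b -> b <= T -> u b <= u a.
Proof.
  intros Hab HbT.
  enough (v b - v a <= 0 * (b - a)) by (unfold v in *; rewrite !clamp_id in * by lra; lra).
  apply (MVT_le v du); [lra | | | ].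
  - intros x Hx. apply is_derive_v. lra.
  - intros x _. apply continuous_v.
  - intros x Hx. apply solution_derive_nonpos. lra.
Qed.

End Concave_solution.

Lemma RInt_ge_nonincreasing (f : R -> R) (a s b : R) : a <= s <= b ->
  ex_RInt f a s -> ex_RInt f s b ->
  (forall x, a <= x <= s -> f s <= f x) -> (forall x, s <= x <= b -> 0 <= f x) ->
  (s - a) * f s <= RInt f a b.
Proof.
  intros Hs Has Hsb Hdec Hpos.
  rewrite <- (RInt_Chasles f a s b) by assumption.
  assert (Hleft : RInt (fun _ => f s) a s <= RInt f a s).
  { apply RInt_le; [lra | apply ex_RInt_const | exact Has |].
    intros x Hx. apply Hdec. lra. }
  assert (Hright : RInt (fun _ => 0) s b <= RInt f s b).
  { apply RInt_le; [lra | apply ex_RInt_const | exact Hsb |].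
    intros x Hx. apply Hpos. lra. }
  rewrite !RInt_const in Hleft, Hright. cbn in *. unfold mult, plus in *. cbn in *. nra.
Qed.

Lemma cont_on_0T_eq0_at_0 (T : R) (f : R -> R) : 0 < T -> cont_on_0T T f ->
  (forall t, 0 < t <= T -> f t = 0) -> f 0 = 0.
Proof.
  intros hT Hc Hzero.
  destruct (Req_dec (f 0) 0) as [| Hne]; [assumption | exfalso].
  assert (He : 0 < Rabs (f 0)) by (apply Rabs_pos_lt, Hne).
  destruct (Hc 0 (conj (Rle_refl 0) (Rlt_le _ _ hT)) _
              (locally_ball (f 0) (mkposreal _ He))) as [d Hd].
  pose proof (cond_pos d). pose proof (Rmin_l (d / 2) T). pose proof (Rmin_r (d / 2) T).
  set (z := Rmin (d / 2) T) in *.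
  assert (Hz : 0 < z) by (apply Rmin_pos; lra).
  assert (Hclose : Rabs (f z - f 0) < Rabs (f 0)).
  { apply Hd; [| lra]. change (Rabs (z - 0) < d).
    rewrite Rminus_0_r, Rabs_pos_eq; lra. }
  rewrite Hzero, Rminus_0_l, Rabs_Ropp in Hclose by lra. lra.
Qed.

Lemma nonincreasing_nonlocal_bc_eq0 (T eta alpha : R) (u : R -> R) :
  0 < eta < T -> 1 < alpha * eta -> cont_on_0T T u ->
  (forall t, 0 <= t <= T -> 0 <= u t) ->
  (forall a b, 0 <= a <= b -> b <= T -> u b <= u a) ->
  u T = alpha * RInt u 0 eta ->
  forall t, 0 <= t <= T -> u t = 0.
Proof.
  intros heta Hae Hc Hpos Hdec HuT.
  set (I := RInt u 0 eta) in *.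
  assert (Hlow : forall s, 0 <= s <= eta -> s * u s <= I).
  { intros s Hs. replace (s * u s) with ((s - 0) * u s) by ring.
    apply RInt_ge_nonincreasing; [lra | | | |].
    - apply (ex_RInt_cont_on_0T T); trivial; lra.
    - apply (ex_RInt_cont_on_0T T); trivial; lra.
    - intros x Hx. apply Hdec; lra.
    - intros x Hx. apply Hpos; lra. }
  assert (Halpha : 0 < alpha) by nra.
  assert (HuT0 : u T = 0).
  { pose proof (Hlow eta ltac:(lra)). pose proof (Hdec eta T ltac:(lra) ltac:(lra)).
    pose proof (Hpos T ltac:(lra)). nra. }
  assert (HI : I = 0) by nra.
  assert (Hzero : forall t, 0 < t <= T -> u t = 0).
  { intros t Ht.
    pose proof (Rmin_l t eta). pose proof (Rmin_r t eta).
    assert (0 < Rmin t eta) by (apply Rmin_pos; lra).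
    assert (u (Rmin t eta) = 0).
    { pose proof (Hlow (Rmin t eta) ltac:(lra)). pose proof (Hpos (Rmin t eta) ltac:(lra)).
      nra. }
    pose proof (Hdec (Rmin t eta) t ltac:(lra) ltac:(lra)).
    pose proof (Hpos t ltac:(lra)). lra. }
  intros t Ht. destruct (Req_dec t 0) as [-> |].
  - apply (cont_on_0T_eq0_at_0 T); trivial; lra.
  - apply Hzero. lra.
Qed.

Theorem lemma2p3 (T eta alpha : R) (y : R -> R)
  (hT : 0 < T) (heta : 0 < eta < T) (halpha : alpha > 1 / eta)
  (hyc : cont_on_0T T y) (hy0 : forall t, 0 <= t <= T -> 0 <= y t) :
  ~ (exists u : R -> R, is_positive_solution T eta alpha y u).
Proof.
  intros [u [[Hc [[du [Hdu Hddu]] [Hdu0 HuT]]] [Hpos [t [Ht Hne]]]]].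
  apply Hne, (nonincreasing_nonlocal_bc_eq0 T eta alpha); trivial.
  - replace 1 with (1 / eta * eta) by (field; lra).
    apply Rmult_lt_compat_r; lra.
  - intros a b Hab HbT. apply (solution_nonincreasing T y u du); trivial.
Qed.
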